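(* Let $\mathcal{M}$ be any $R\times K$ matrix with entries in a finite set $V$ and let $\hat v\subseteq V$. For each row $r$ let $z_r$ be the number of stretches of $\hat v$ in row $r$. For $0\le k<K$ define $$ls^+_k=\max(0,\#^{\hat v}_k-\#^{\hat v}_{k-1}),\qquad us^+_k=\#^{\hat v}_k-\max(0,\#^{\hat v}_{k-1}+\#^{\hat v}_k-R),$$ $$ls^-_k=\max(0,\#^{\hat v}_k-\#^{\hat v}_{k+1}),\qquad us^-_k=\#^{\hat v}_k-\max(0,\#^{\hat v}_{k+1}+\#^{\hat v}_k-R).$$ Then $$\sum_{k=0}^{K-1}ls^+_k\le\sum_{r=0}^{R-1}z_r\le\sum_{k=0}^{K-1}us^+_k\quad\text{and}\quad \sum_{k=0}^{K-1}ls^-_k\le\sum_{r=0}^{R-1}z_r\le\sum_{k=0}^{K-1}us^-_k.$$ Moreover, for each $k$, $ls^+_k$ and $us^+_k$ are respectively a lower and an upper bound on the number of stretches of $\hat v$ (over all rows) starting in column $k$, and $ls^-_k$, $us^-_k$ are respectively a lower and an upper bound on the number of stretches of $\hat v$ ending in column $k$.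
   Context: Columns are indexed $0,\ldots,K-1$ and rows $0,\ldots,R-1$. For $\hat v\subseteq V$ and a column $k$, $\#^{\hat v}_k$ denotes the number of rows $r$ with $\mathcal{M}_{r,k}\in\hat v$, with the convention $\#^{\hat v}_{-1}=\#^{\hat v}_{K}=0$. A stretch of $\hat v$ in row $r$ is a maximal (with respect to inclusion) interval $[a,b]$ of column indices such that $\mathcal{M}_{r,j}\in\hat v$ for all $a\le j\le b$; it starts in column $a$, ends in column $b$, and has length $b-a+1$. *)

From mathcomp Require Import all_boot.
Set Implicit Arguments. Unset Strict Implicit. Unset Printing Implicit Defensive.

Section Stretches.
Variables (V : finType) (R K : nat).
Implicit Types (M : 'I_R -> 'I_K -> V) (vh : {set V}).

(* #^{vh}_j for a column index j : nat; equals 0 when j >= K (so #_K = 0). *)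
Definition colcount M vh (j : nat) : nat :=
  #|[set r : 'I_R | [exists c : 'I_K, (val c == j) && (M r c \in vh)]]|.

(* #^{vh}_{k-1}, with the convention #_{-1} = 0. *)
Definition colcount_prev M vh (k : nat) : nat :=
  if k is k'.+1 then colcount M vh k' else 0.

Definition all_in M vh (r : 'I_R) (a b : 'I_K) : bool :=
  [forall j : 'I_K, ((a <= j) && (j <= b)) ==> (M r j \in vh)].

Definition is_stretch M vh (r : 'I_R) (a b : 'I_K) : bool :=
  [&& a <= b, all_in M vh r a b &
     [forall a' : 'I_K, forall b' : 'I_K,
        [&& a' <= a, b <= b' & all_in M vh r a' b'] ==> (a' == a) && (b' == b)]].

Definition stretches M vh (r : 'I_R) : {set 'I_K * 'I_K} :=
  [set p | is_stretch M vh r p.1 p.2].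

Definition nstretch M vh (r : 'I_R) : nat := #|stretches M vh r|.

Definition nstart M vh (k : 'I_K) : nat :=
  \sum_(r < R) #|[set p in stretches M vh r | p.1 == k]|.
Definition nend M vh (k : 'I_K) : nat :=
  \sum_(r < R) #|[set p in stretches M vh r | p.2 == k]|.

(* bounds; subtraction on nat is truncated, which coincides with the paper's
   formulas since all the differences below are taken inside max(0,.) or are
   nonnegative anyway. *)
Definition lsP M vh (k : 'I_K) : nat :=
  maxn 0 (colcount M vh k - colcount_prev M vh k).
Definition usP M vh (k : 'I_K) : nat :=
  colcount M vh k - maxn 0 (colcount_prev M vh k + colcount M vh k - R).
Definition lsM M vh (k : 'I_K) : nat :=
  maxn 0 (colcount M vh k - colcount M vh k.+1).
Definition usM M vh (k : 'I_K) : nat :=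
  colcount M vh k - maxn 0 (colcount M vh k.+1 + colcount M vh k - R).

End Stretches.

From mathcomp Require Import all_boot.
From mathcomp Require Import zify.

Set Implicit Arguments.
Unset Strict Implicit.
Unset Printing Implicit Defensive.

(* Write occ r j for "row r has a vh-entry in column j" (false outside the
   matrix), so that #^{vh}_j = #{r | occ r j}.  The heart of the proof is a
   per-row characterisation of stretch starts: in row r at most one stretch
   starts in column k, and one does exactly when occ r k holds but occ r (k-1)
   does not (uniqueness from maximality; existence by extending the run from k
   as far to the right as possible).  Symmetrically for stretch ends, using
   column k+1.  Hence the number of stretches starting in column k is the size
   of the set difference X \ B with X = {r | occ r k}, B = {r | occ r (k-1)},
   and elementary inclusion-exclusion gives |X|-|B| <= |X \ B| <= |X| -
   (|X|+|B|-R), which are exactly ls^+_k and us^+_k (resp. ls^-_k, us^-_k).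
   Finally every stretch has exactly one start (and one end) column, so
   summing the per-column bounds over k bounds the total number of stretches. *)

Lemma card_setD_bounds (T : finType) (X B : {set T}) :
  #|X| - #|B| <= #|X :\: B| <= #|X| - (#|B| + #|X| - #|T|).
Proof.
rewrite cardsD.
have capB : #|X :&: B| <= #|B| by apply/subset_leq_card/subsetIr.
have capX : #|X :&: B| <= #|X| by apply/subset_leq_card/subsetIl.
have cupT : #|X :|: B| <= #|T| by apply: max_card.
have := cardsU X B; lia.
Qed.

Lemma leq_sum_between (n : nat) (l x u : 'I_n -> nat) :
  (forall k, l k <= x k <= u k) ->
  \sum_(k < n) l k <= \sum_(k < n) x k <= \sum_(k < n) u k.
Proof.
by move=> lxu; apply/andP; split; apply: leq_sum => k _; case/andP: (lxu k).
Qed.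

Section StretchCounting.
Variables (V : finType) (R K : nat) (M : 'I_R -> 'I_K -> V) (vh : {set V}).
Implicit Types (r : 'I_R) (a b k : 'I_K).

Local Notation all_in := (all_in M vh).
Local Notation is_stretch := (is_stretch M vh).

Lemma all_inP r a b :
  reflect (forall j : 'I_K, a <= j <= b -> M r j \in vh) (all_in r a b).
Proof.
apply: (iffP forallP) => [run j /(implyP (run j))|run j] //.
by apply/implyP/run.
Qed.

Lemma is_stretchP r a b :
  reflect [/\ a <= b, all_in r a b &
     forall a' b' : 'I_K, a' <= a -> b <= b' -> all_in r a' b' ->
       a' = a /\ b' = b] (is_stretch r a b).
Proof.
apply: (iffP and3P) => [[ab run /forallP maxi]|[ab run maxi]]; split=> //.
  move=> a' b' a'a bb' run'; move/forallP/(_ b')/implyP: (maxi a').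
  by rewrite a'a bb' run' => /(_ isT) /andP[/eqP -> /eqP ->].
apply/forallP=> a'; apply/forallP=> b'; apply/implyP=> /and3P[a'a bb' run'].
by case: (maxi a' b' a'a bb' run') => -> ->; rewrite !eqxx.
Qed.

Lemma all_in_refl r k : M r k \in vh -> all_in r k k.
Proof.
move=> Mk; apply/all_inP => j jk.
by have -> : j = k by apply/val_inj/eqP; rewrite eqn_leq andbC.
Qed.

Lemma all_in_cat r a b c d :
  all_in r a b -> all_in r c d -> c <= b.+1 -> all_in r a d.
Proof.
move=> /all_inP run1 /all_inP run2 cb; apply/all_inP => j /andP[aj jd].
have [jb|bj] := leqP j b; first by apply: run1; rewrite aj jb.
by apply: run2; rewrite jd andbT; apply: leq_trans cb bj.
Qed.

Definition occ r (j : nat) : bool :=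
  [exists c : 'I_K, (val c == j) && (M r c \in vh)].

Definition occ_prev r (k : nat) : bool := if k is j.+1 then occ r j else false.

Lemma occP r j : reflect (exists2 c : 'I_K, val c = j & M r c \in vh) (occ r j).
Proof.
apply: (iffP existsP) => [[c /andP[/eqP <- Mc]]|[c <- Mc]]; first by exists c.
by exists c; rewrite eqxx.
Qed.

Lemma occ_ord r k : occ r k = (M r k \in vh).
Proof.
apply/occP/idP => [[c /val_inj <-] //|Mk]; by exists k.
Qed.

Lemma colcountE (j : nat) : colcount M vh j = #|[set r | occ r j]|.
Proof. by []. Qed.

Lemma colcount_prevE (k : nat) : colcount_prev M vh k = #|[set r | occ_prev r k]|.
Proof.
case: k => [|k] //=; apply/esym/eqP; rewrite cards_eq0; apply/eqP/setP => r.
by rewrite !inE.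
Qed.

Lemma occ_prev_in r a b (k : nat) : all_in r a b -> a < k <= b -> occ_prev r k.
Proof.
case: k => [|k] /all_inP run /andP[ak kb] //=; apply/occP.
have kK : k < K by have := ltn_ord b; lia.
by exists (Ordinal kK) => //; apply: run => /=; lia.
Qed.

Lemma occ_next_in r a b (k : nat) : all_in r a b -> a <= k < b -> occ r k.+1.
Proof.
move=> /all_inP run /andP[ak kb]; apply/occP.
have kK : k.+1 < K by have := ltn_ord b; lia.
by exists (Ordinal kK) => //; apply: run => /=; lia.
Qed.

Lemma stretch_start_free r a b : is_stretch r a b -> ~~ occ_prev r a.
Proof.
case/is_stretchP => _ run maxi; case: a run maxi => [[|a] aK] //= run maxi.
apply/occP => -[c ec Mc].
have run' : all_in r c b by apply: all_in_cat (all_in_refl Mc) run _; rewrite ec.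
have ca : c <= a.+1 by rewrite ec.
by case: (maxi c b ca (leqnn b) run') => /(congr1 val) /=; rewrite ec; lia.
Qed.

Lemma stretch_end_free r a b : is_stretch r a b -> ~~ occ r b.+1.
Proof.
case/is_stretchP => _ run maxi; apply/occP => -[c ec Mc].
have run' : all_in r a c by apply: all_in_cat run (all_in_refl Mc) _; rewrite ec.
have bc : b <= c by rewrite ec.
by case: (maxi a c (leqnn a) bc run') => _ /(congr1 val) /=; rewrite ec; lia.
Qed.

Lemma stretch_start_uniq r k b b' :
  is_stretch r k b -> is_stretch r k b' -> b = b'.
Proof.
wlog bb' : b b' / b <= b' => [sym|].
  by have [le|/ltnW le] := leqP b b' => s s'; [apply: sym | apply/esym/sym].
move=> /is_stretchP[_ _ maxi] /is_stretchP[_ run' _].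
by case: (maxi k b' (leqnn k) bb' run').
Qed.

Lemma stretch_end_uniq r a a' k :
  is_stretch r a k -> is_stretch r a' k -> a = a'.
Proof.
wlog aa' : a a' / a <= a' => [sym|].
  by have [le|/ltnW le] := leqP a a' => s s'; [apply: sym | apply/esym/sym].
move=> /is_stretchP[_ run _] /is_stretchP[_ _ maxi].
by case: (maxi a k aa' (leqnn k) run).
Qed.

(* A vh-entry with no vh-entry on its left starts a stretch: the run
   extended as far to the right as possible. *)
Lemma stretch_start_exists r k :
  M r k \in vh -> ~~ occ_prev r k -> exists b, is_stretch r k b.
Proof.
move=> Mk free.
have [b run bmax] := @arg_maxnP _ k (fun j => all_in r k j) val (all_in_refl Mk).
have kb : k <= b := bmax k (all_in_refl Mk).
exists b; apply/is_stretchP; split=> // a' b' a'k bb' run'.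
have ea : a' = k.
  apply/val_inj/eqP; rewrite eqn_leq a'k leqNgt; apply: contra free => a'k'.
  by apply: occ_prev_in run' _; rewrite a'k' (leq_trans kb bb').
subst a'; split=> //; apply/val_inj/eqP; rewrite eqn_leq bb' andbT.
exact: bmax.
Qed.

Lemma stretch_end_exists r k :
  M r k \in vh -> ~~ occ r k.+1 -> exists a, is_stretch r a k.
Proof.
move=> Mk free.
have [a run amin] := @arg_minnP _ k (fun j => all_in r j k) val (all_in_refl Mk).
have ak : a <= k := amin k (all_in_refl Mk).
exists a; apply/is_stretchP; split=> // a' b' a'a kb' run'.
have eb : b' = k.
  apply/val_inj/eqP; rewrite eqn_leq kb' andbT leqNgt; apply: contra free => kb''.
  by apply: occ_next_in run' _; rewrite kb'' (leq_trans a'a ak).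
subst b'; split=> //; apply/val_inj/eqP; rewrite eqn_leq a'a /=.
exact: amin.
Qed.

Lemma card_le1_eq (T : finType) (S : {set T}) (inhabited : bool) :
  #|S| <= 1 -> (0 < #|S|) = inhabited -> #|S| = inhabited.
Proof. by move=> le1 <-; case: #|S| le1 => [|[|]]. Qed.

Lemma card_stretch_start r k :
  #|[set p in stretches M vh r | p.1 == k]| = (M r k \in vh) && ~~ occ_prev r k.
Proof.
apply: card_le1_eq; last first.
  apply/card_gt0P/andP => [[[a b]]|[Mk free]].
    rewrite !inE => /andP[s /eqP /= ea]; subst a.
    split; last exact: stretch_start_free s.
    by case/is_stretchP: s => ab /all_inP run _; apply: run; rewrite leqnn.
  by have [b s] := stretch_start_exists Mk free; exists (k, b); rewrite !inE s eqxx.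
apply/card_le1_eqP => -[a b] [a' b']; rewrite !inE /=.
move=> /andP[s /eqP ea] /andP[s' /eqP ea']; subst a a'.
by rewrite (stretch_start_uniq s s').
Qed.

Lemma card_stretch_end r k :
  #|[set p in stretches M vh r | p.2 == k]| = (M r k \in vh) && ~~ occ r k.+1.
Proof.
apply: card_le1_eq; last first.
  apply/card_gt0P/andP => [[[a b]]|[Mk free]].
    rewrite !inE => /andP[s /eqP /= eb]; subst b.
    split; last exact: stretch_end_free s.
    by case/is_stretchP: s => ab /all_inP run _; apply: run; rewrite leqnn andbT.
  by have [a s] := stretch_end_exists Mk free; exists (a, k); rewrite !inE s eqxx.
apply/card_le1_eqP => -[a b] [a' b']; rewrite !inE /=.
move=> /andP[s /eqP eb] /andP[s' /eqP eb']; subst b b'.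
by rewrite (stretch_end_uniq s s').
Qed.

Lemma nstartE k : nstart M vh k = #|[set r | occ r k] :\: [set r | occ_prev r k]|.
Proof.
rewrite /nstart -sum1_card [RHS]big_mkcond /=; apply: eq_bigr => r _.
by rewrite card_stretch_start !inE occ_ord andbC; case: (_ && _).
Qed.

Lemma nendE k : nend M vh k = #|[set r | occ r k] :\: [set r | occ r k.+1]|.
Proof.
rewrite /nend -sum1_card [RHS]big_mkcond /=; apply: eq_bigr => r _.
by rewrite card_stretch_end !inE occ_ord andbC; case: (_ && _).
Qed.

Lemma nstart_bounds k : lsP M vh k <= nstart M vh k <= usP M vh k.
Proof.
rewrite /lsP /usP nstartE colcountE colcount_prevE !max0n.
have := card_setD_bounds [set r | occ r k] [set r | occ_prev r k].
by rewrite card_ord.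
Qed.

Lemma nend_bounds k : lsM M vh k <= nend M vh k <= usM M vh k.
Proof.
rewrite /lsM /usM nendE !colcountE !max0n.
have := card_setD_bounds [set r | occ r k] [set r | occ r k.+1].
by rewrite card_ord.
Qed.

(* Each stretch has one start column and one end column, so classifying the
   stretches of every row by the column f p of a given endpoint counts them all. *)
Lemma sum_nstretch_by (f : 'I_K * 'I_K -> 'I_K) :
  \sum_(r < R) nstretch M vh r
  = \sum_(k < K) \sum_(r < R) #|[set p in stretches M vh r | f p == k]|.
Proof.
rewrite exchange_big /=; apply: eq_bigr => r _.
rewrite /nstretch -sum1_card (partition_big f xpredT) //=.
by apply: eq_bigr => k _; rewrite -sum1_card; apply: eq_bigl => p; rewrite !inE.
Qed.

End StretchCounting.

Theorem mainTheorem12 (V : finType) (R K : nat) (M : 'I_R -> 'I_K -> V)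
    (vh : {set V}) :
  [/\ \sum_(k < K) lsP M vh k <= \sum_(r < R) nstretch M vh r
        <= \sum_(k < K) usP M vh k,
      \sum_(k < K) lsM M vh k <= \sum_(r < R) nstretch M vh r
        <= \sum_(k < K) usM M vh k,
      forall k : 'I_K, lsP M vh k <= nstart M vh k <= usP M vh k
    & forall k : 'I_K, lsM M vh k <= nend M vh k <= usM M vh k].
Proof.
have starts := nstart_bounds M vh; have ends := nend_bounds M vh.
split=> //.
  by rewrite (sum_nstretch_by M vh fst); apply: leq_sum_between.
by rewrite (sum_nstretch_by M vh snd); apply: leq_sum_between.
Qed.
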